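(* The bracket on $\mathbb{R}^2$ determined by \[ \{\Omega_1,\Omega_2\} := -\frac{I_{13}\Omega_1 + I_{23}\Omega_2 + B_3}{I_{11} I_{22}} \] coincides with the reduced nonholonomic bracket $\{\cdot,\cdot\}_{\widehat{\mathcal{D}^*}}$ on $\widehat{\mathcal{D}^*}=\mathcal{D}^*/SO(3)\cong\mathbb{R}^2$, expressed in the coordinates $(\Omega_1,\Omega_2)$.
   Context: Suslov problem with a gyrostat: configuration space $Q=SO(3)$, with $\Omega=(\Omega_1,\Omega_2,\Omega_3)$ the body angular velocity. The Lagrangian is $L=\frac12(\mathbb{I}\Omega)\cdot\Omega + B\cdot\Omega$, where $B=(B_1,B_2,B_3)\in\mathbb{R}^3$ is the constant angular momentum of the gyrostat and the inertia tensor is \[ \mathbb{I}=\begin{pmatrix} I_{11} & 0 & I_{13}\\ 0 & I_{22} & I_{23}\\ I_{13} & I_{23} & I_{33}\end{pmatrix}. \] The kinetic term defines a Riemannian metric $g$ on $Q$ and the linear term defines a gyroscopic 1-form $\eta$. The nonholonomic constraint $\Omega_3=0$ defines a left-invariant, non-integrable rank-2 distribution $\mathcal{D}\subset TQ$. Using $g$, $\mathcal{D}^*$ is identified with the annihilator of $\mathcal{D}^\perp$ in $T^*Q$, $\eta=\eta^\parallel+\eta^\perp$ is decomposed accordingly, $i_\mathcal{D}^*:T^*Q\to\mathcal{D}^*$ is the projection, $\mathcal{P}^*:\mathcal{D}^*\hookrightarrow T^*Q$ the inclusion, and $\tau_{\mathcal{D}^*}:\mathcal{D}^*\to Q$ the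 bundle projection. The nonholonomic bracket on $\mathcal{D}^*$ is $\{\varphi,\psi\}_{\mathcal{D}^*}:=\{\varphi\circ i_\mathcal{D}^*,\psi\circ i_\mathcal{D}^*\}\circ(\mathcal{P}^*+\eta^\perp\circ\tau_{\mathcal{D}^*})$, with $\{\cdot,\cdot\}$ the canonical Poisson bracket on $T^*Q$. $SO(3)$ acts on $Q$ by left multiplication, preserving $L$ and $\mathcal{D}$; the bracket is invariant and descends to a reduced bracket $\{\cdot,\cdot\}_{\widehat{\mathcal{D}^*}}$ on $\widehat{\mathcal{D}^*}=\mathcal{D}^*/SO(3)\cong\mathbb{R}^2$. If $p_1,p_2$ are the quasi-momenta associated with a left-invariant adapted frame, then on the constraint space $\Omega_1=(p_1-B_1)/I_{11}$, $\Omega_2=(p_2-B_2)/I_{22}$, so $(\Omega_1,\Omega_2)$ serve as coordinates on $\widehat{\mathcal{D}^*}$. The reduced equations are $\dot\Omega_1=-\frac{1}{I_{11}}(I_{13}\Omega_1+I_{23}\Omega_2+B_3)\Omega_2$, $\dot\Omega_2=\frac{1}{I_{22}}(I_{13}\Omega_1+I_{23}\Omega_2+B_3)\Omega_1$, Hamiltonian with respect to this bracket and $H=\frac12(I_{11}\Omega_1^2+I_{22}\Omega_2^2)$. *)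

From HB Require Import structures.
From mathcomp Require Import all_boot all_order all_algebra.
From mathcomp Require Import all_classical all_reals all_analysis.
Set Implicit Arguments.
Unset Strict Implicit.
Unset Printing Implicit Defensive.
Import Order.TTheory GRing.Theory Num.Theory.
Import numFieldNormedType.Exports.
Local Open Scope ring_scope.

Section SuslovDefs.
Variable R : realType.

(* Body-frame vectors (angular velocities) and covectors (momenta) are
   row vectors of R^3; indices 0,1,2 stand for the paper's 1,2,3. *)
Definition i0 : 'I_3 := @Ordinal 3 0 isT.
Definition i1 : 'I_3 := @Ordinal 3 1 isT.
Definition i2 : 'I_3 := @Ordinal 3 2 isT.
Definition j0 : 'I_2 := @Ordinal 2 0 isT.
Definition j1 : 'I_2 := @Ordinal 2 1 isT.

Definition evec (i : 'I_3) : 'rV[R]_3 := delta_mx 0 i.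
Definition dotv (u v : 'rV[R]_3) : R := \sum_i u 0 i * v 0 i.
Definition crossv (u v : 'rV[R]_3) : 'rV[R]_3 :=
  \row_k (if k == i0 then u 0 i1 * v 0 i2 - u 0 i2 * v 0 i1
          else if k == i1 then u 0 i2 * v 0 i0 - u 0 i0 * v 0 i2
          else u 0 i0 * v 0 i1 - u 0 i1 * v 0 i0).

Definition hat (w : 'rV[R]_3) : 'M[R]_3 :=
  \matrix_(i < 3, j < 3)
    match nat_of_ord i, nat_of_ord j with
    | 0, 1 => - w 0 i2 | 0, 2 => w 0 i1
    | 1, 0 => w 0 i2   | 1, 2 => - w 0 i0
    | 2, 0 => - w 0 i1 | 2, 1 => w 0 i0
    | _, _ => 0 end.

Definition is_SO3 (g : 'M[R]_3) : Prop := g *m g^T = 1 /\ \det g = 1.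

(* Cayley transform so(3) -> SO(3); t |-> g * cayley (t * hat w) is a curve
   in SO(3) through g with velocity g * hat w. *)
Definition cayley (A : 'M[R]_3) : 'M[R]_3 :=
  invmx (1 - (2 : R)^-1 *: A) *m (1 + (2 : R)^-1 *: A).

(* T*SO(3) in the left trivialization: a point is (g, M), g in SO(3),
   M the body momentum (alpha_g(g hat xi) = M . xi).  Functions on T*Q are
   represented as F : 'M_3 -> 'rV_3 -> R (only values with g in SO(3) matter). *)
Definition gder (F : 'M[R]_3 -> 'rV[R]_3 -> R) (i : 'I_3) g M : R :=
  derive1 (fun t : R => F (g *m cayley (t *: hat (evec i))) M) 0.
Definition mder (F : 'M[R]_3 -> 'rV[R]_3 -> R) (i : 'I_3) g M : R :=
  derive1 (fun t : R => F g (M + t *: evec i)) 0.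
Definition gradM (F : 'M[R]_3 -> 'rV[R]_3 -> R) g M : 'rV[R]_3 :=
  \row_i mder F i g M.

(* Canonical Poisson bracket of T*SO(3), written in the left trivialization
   (convention {q,p} = 1, df/dt = {f,H}). *)
Definition canbr (F H : 'M[R]_3 -> 'rV[R]_3 -> R) g M : R :=
  \sum_i (gder F i g M * mder H i g M - mder F i g M * gder H i g M)
  - dotv M (crossv (gradM F g M) (gradM H g M)).

Definition inertia (I11 I22 I33 I13 I23 : R) : 'M[R]_3 :=
  \matrix_(i < 3, j < 3)
    match nat_of_ord i, nat_of_ord j with
    | 0, 0 => I11 | 1, 1 => I22 | 2, 2 => I33
    | 0, 2 => I13 | 2, 0 => I13
    | 1, 2 => I23 | 2, 1 => I23
    | _, _ => 0 end.

Definition posdef (Im : 'M[R]_3) : Prop :=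
  forall v : 'rV[R]_3, v != 0 -> 0 < dotv v (v *m Im).

Definition gmetric (Im : 'M[R]_3) (u w : 'rV[R]_3) : R := dotv u (w *m Im).

(* Constraint distribution D : Omega_3 = 0 (left invariant, body frame). *)
Definition inD (u : 'rV[R]_3) : Prop := u 0 i2 = 0.
Definition inDperp (Im : 'M[R]_3) (w : 'rV[R]_3) : Prop :=
  forall u, inD u -> gmetric Im u w = 0.
(* D^* identified with the annihilator of D^perp. *)
Definition inDstar (Im : 'M[R]_3) (m : 'rV[R]_3) : Prop :=
  forall w, inDperp Im w -> dotv m w = 0.
(* The complementary summand (D^perp)^* = annihilator of D. *)
Definition inDperpstar (m : 'rV[R]_3) : Prop :=
  forall u, inD u -> dotv m u = 0.

(* i_D^* : projection T*Q -> D^* along the decomposition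
   T*Q = D^* (+) (D^perp)^* ; characterized by its defining property. *)
Definition is_iDstar (Im : 'M[R]_3) (iD : 'rV[R]_3 -> 'rV[R]_3) : Prop :=
  forall M, inDstar Im (iD M) /\ inDperpstar (M - iD M).

(* eta = eta^par + eta^perp with eta^par in D^*, eta^perp in (D^perp)^*;
   the gyroscopic 1-form eta has body components B. *)
Definition is_etaperp (Im : 'M[R]_3) (B etaperp : 'rV[R]_3) : Prop :=
  inDperpstar etaperp /\ inDstar Im (B - etaperp).

Definition omega_coord (Im : 'M[R]_3) (B m : 'rV[R]_3) : 'rV[R]_2 :=
  \row_k (if k == j0 then (dotv m (evec i0) - B 0 i0) / Im i0 i0
          else (dotv m (evec i1) - B 0 i1) / Im i1 i1).

(* Nonholonomic bracket on D^* of the pullbacks phi o pi, psi o pi of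
   functions on D^*/SO(3) (written in the coordinates Omega),
   evaluated at the point (g, m) of D^*:
   {phi o pi o i_D^*, psi o pi o i_D^*} at (g, m + eta^perp). *)
Definition nh_bracket (Im : 'M[R]_3) (B : 'rV[R]_3) (iD : 'rV[R]_3 -> 'rV[R]_3)
  (etaperp : 'rV[R]_3) (phi psi : 'rV[R]_2 -> R) (g : 'M[R]_3) (m : 'rV[R]_3) : R :=
  canbr (fun _ M => phi (omega_coord Im B (iD M)))
        (fun _ M => psi (omega_coord Im B (iD M))) g (m + etaperp).

Definition pd2 (phi : 'rV[R]_2 -> R) (k : 'I_2) (x : 'rV[R]_2) : R :=
  derive1 (fun t : R => phi (x + t *: delta_mx 0 k)) 0.

Definition bracket_R2 (c : 'rV[R]_2 -> R) (phi psi : 'rV[R]_2 -> R)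
  (x : 'rV[R]_2) : R :=
  c x * (pd2 phi j0 x * pd2 psi j1 x - pd2 phi j1 x * pd2 psi j0 x).

Definition suslov_c (I11 I22 I13 I23 : R) (B : 'rV[R]_3) (x : 'rV[R]_2) : R :=
  - (I13 * x 0 j0 + I23 * x 0 j1 + B 0 i2) / (I11 * I22).

End SuslovDefs.

(* The two brackets are compared on pullbacks of functions of (Omega_1, Omega_2).
   Such functions do not depend on the base point of T*SO(3), so only the Lie-Poisson
   term -M . (grad F x grad H) of the canonical bracket survives.  Their momentum
   gradients lie in span(e_1, e_2), hence the bracket is -M_3 times the planar
   Jacobian divided by I_11 I_22.  At M = m + eta^perp, the conditions m in D^* and
   B - eta^perp in D^* (pairing with the generator of D^perp) determine
   M_3 = B_3 + I_13 Omega_1 + I_23 Omega_2. *)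
From HB Require Import structures.
From mathcomp Require Import all_boot all_order all_algebra.
From mathcomp Require Import all_classical all_reals all_analysis.
From mathcomp Require Import ring lra.

Set Implicit Arguments.
Unset Strict Implicit.
Unset Printing Implicit Defensive.

Import Order.TTheory GRing.Theory Num.Theory.
Import numFieldNormedType.Exports.
Local Open Scope ring_scope.

Section RowCalculus.
Variable R : realType.

Lemma sum_ord3 (F : 'I_3 -> R) : \sum_i F i = F i0 + F i1 + F i2.
Proof.
rewrite !big_ord_recr big_ord0 /= add0r.
by congr (F _ + F _ + F _); apply: val_inj.
Qed.

Lemma ord3P (k : 'I_3) : [\/ k = i0, k = i1 | k = i2].
Proof. by case: k => [[|[|[|//]]] hk]; [apply: Or31|apply: Or32|apply: Or33]; apply: val_inj. Qed.

Lemma ord2P (k : 'I_2) : k = j0 \/ k = j1.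
Proof. by case: k => [[|[|//]] hk]; [left|right]; apply: val_inj. Qed.

Lemma dotvE (u v : 'rV[R]_3) :
  dotv u v = u 0 i0 * v 0 i0 + u 0 i1 * v 0 i1 + u 0 i2 * v 0 i2.
Proof. by rewrite /dotv sum_ord3. Qed.

Lemma mulmx_rowE (u : 'rV[R]_3) (A : 'M[R]_3) j :
  (u *m A) 0 j = u 0 i0 * A i0 j + u 0 i1 * A i1 j + u 0 i2 * A i2 j.
Proof. by rewrite mxE sum_ord3. Qed.

Lemma evecE i j : evec R i 0 j = (j == i)%:R.
Proof. by rewrite mxE eqxx. Qed.

Lemma dotv_evecr (u : 'rV[R]_3) i : dotv u (evec R i) = u 0 i.
Proof.
by rewrite dotvE !evecE; case: (ord3P i) => ->; rewrite /= ?mulr1 ?mulr0 ?addr0 ?add0r.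
Qed.

Lemma dotv_evecl (u : 'rV[R]_3) i : dotv (evec R i) u = u 0 i.
Proof. by rewrite /dotv; under eq_bigr do rewrite mulrC; apply: dotv_evecr. Qed.

Lemma evec_neq0 i : evec R i != 0.
Proof. by apply/eqP => /rowP /(_ i); rewrite evecE mxE eqxx => /eqP; rewrite oner_eq0. Qed.

Lemma posdef_diag_gt0 (A : 'M[R]_3) i : posdef A -> 0 < A i i.
Proof.
move=> /(_ _ (evec_neq0 i)); rewrite dotv_evecl mxE sum_ord3 !evecE.
by case: (ord3P i) => ->; rewrite /= ?mul1r ?mul0r ?addr0 ?add0r.
Qed.

Lemma dotv_crossv_planar (M : 'rV[R]_3) a0 a1 b0 b1 :
  dotv M (crossv (a0 *: evec R i0 + a1 *: evec R i1) (b0 *: evec R i0 + b1 *: evec R i1))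
  = M 0 i2 * (a0 * b1 - a1 * b0).
Proof. by rewrite dotvE !mxE /=; ring. Qed.

Lemma canbr_fiberwise (f h : 'rV[R]_3 -> R) g M :
  canbr (fun _ => f) (fun _ => h) g M
  = - dotv M (crossv (gradM (fun _ => f) g M) (gradM (fun _ => h) g M)).
Proof.
rewrite /canbr big1 ?sub0r // => i _.
by rewrite /gder !derive1_cst mul0r mulr0 subr0.
Qed.

Lemma derive1_along (phi : 'rV[R]_2 -> R) x v :
  derive1 (fun t : R => phi (x + t *: v)) 0 = derive phi x v.
Proof.
rewrite /derive1 /derive; set dq := (fun _ : R => _); set dq' := (fun _ : R => _).
suff -> : dq = dq' by [].
by apply: funext => h; rewrite /dq /dq' scale0r !addr0 (addrC x).
Qed.

Lemma pd2E (phi : 'rV[R]_2 -> R) k x :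
  differentiable phi x -> pd2 phi k x = 'd phi x (delta_mx 0 k).
Proof. by move=> dphi; rewrite /pd2 derive1_along deriveE. Qed.

Lemma inDperpstar_coord (v : 'rV[R]_3) :
  inDperpstar v -> v 0 i0 = 0 /\ v 0 i1 = 0.
Proof.
move=> hv; rewrite -!(dotv_evecr v).
by split; apply: hv; rewrite /inD evecE.
Qed.

End RowCalculus.

Section ReducedCoordinates.
Variables (R : realType) (Im : 'M[R]_3).

Lemma omega_coordE (B M : 'rV[R]_3) :
  omega_coord Im B M
  = ((M 0 i0 - B 0 i0) / Im i0 i0) *: delta_mx 0 j0
    + ((M 0 i1 - B 0 i1) / Im i1 i1) *: delta_mx 0 j1.
Proof.
by apply/rowP => k; rewrite !mxE !dotv_evecr; case: (ord2P k) => ->;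
  rewrite /= ?mulr1 ?mulr0 ?addr0 ?add0r.
Qed.

Lemma omega_coordD (B M v : 'rV[R]_3) :
  omega_coord Im B (M + v) = omega_coord Im B M + omega_coord Im 0 v.
Proof. by apply/rowP => k; rewrite !mxE !dotv_evecr !mxE; case: ifP => _; ring. Qed.

Lemma omega_coord0Z (a : R) (v : 'rV[R]_3) :
  omega_coord Im 0 (a *: v) = a *: omega_coord Im 0 v.
Proof. by rewrite !omega_coordE !mxE !subr0 scalerDr !scalerA !mulrA. Qed.

Variable B : 'rV[R]_3.

Lemma omega_coord_annD (M v : 'rV[R]_3) :
  inDperpstar v -> omega_coord Im B (M + v) = omega_coord Im B M.
Proof.
move=> /inDperpstar_coord [v0 v1].
by rewrite omega_coordD [omega_coord Im 0 v]omega_coordE !mxE v0 v1 !subr0 !mul0r !scale0r !addr0.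
Qed.

Lemma omega_coord_iD (Im' : 'M[R]_3) iD (M : 'rV[R]_3) :
  is_iDstar Im' iD -> omega_coord Im B (iD M) = omega_coord Im B M.
Proof.
move=> /(_ M) [_ hann].
by rewrite -(omega_coord_annD (iD M) hann) addrC subrK.
Qed.

Lemma diff_omega_coord0 (phi : 'rV[R]_2 -> R) x v :
  differentiable phi x ->
  'd phi x (omega_coord Im 0 v)
  = v 0 i0 / Im i0 i0 * pd2 phi j0 x + v 0 i1 / Im i1 i1 * pd2 phi j1 x.
Proof.
move=> dphi; rewrite !pd2E // omega_coordE !mxE !subr0.
by rewrite linearD !linearZ.
Qed.

Variables (Im' : 'M[R]_3) (iD : 'rV[R]_3 -> 'rV[R]_3).
Hypothesis iDP : is_iDstar Im' iD.

Lemma mder_omega_pullback (phi : 'rV[R]_2 -> R) i g M :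
  differentiable phi (omega_coord Im B M) ->
  mder (fun _ M => phi (omega_coord Im B (iD M))) i g M
  = 'd phi (omega_coord Im B M) (omega_coord Im 0 (evec R i)).
Proof.
move=> dphi; rewrite /mder -deriveE // -derive1_along.
congr derive1; apply: funext => t.
by rewrite (omega_coord_iD _ iDP) omega_coordD omega_coord0Z.
Qed.

Lemma gradM_omega_pullback (phi : 'rV[R]_2 -> R) g M :
  let x := omega_coord Im B M in
  differentiable phi x ->
  gradM (fun _ M => phi (omega_coord Im B (iD M))) g M
  = (pd2 phi j0 x / Im i0 i0) *: evec R i0 + (pd2 phi j1 x / Im i1 i1) *: evec R i1.
Proof.
move=> x dphi; apply/rowP => i.
rewrite !mxE mder_omega_pullback // diff_omega_coord0 // !evecE.
by case: (ord3P i) => ->; rewrite /=; ring.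
Qed.

Lemma nh_bracket_omega etaperp (phi psi : 'rV[R]_2 -> R) g m :
  let x := omega_coord Im B m in
  inDperpstar etaperp -> differentiable phi x -> differentiable psi x ->
  nh_bracket Im B iD etaperp phi psi g m
  = - (m + etaperp) 0 i2 / (Im i0 i0 * Im i1 i1)
    * (pd2 phi j0 x * pd2 psi j1 x - pd2 phi j1 x * pd2 psi j0 x).
Proof.
move=> x heta dphi dpsi; have xE := omega_coord_annD m heta.
rewrite /nh_bracket canbr_fiberwise !gradM_omega_pullback ?xE //.
by rewrite dotv_crossv_planar invfM; ring.
Qed.

End ReducedCoordinates.

Section SuslovMomentum.
Variables (R : realType) (I11 I22 I33 I13 I23 : R).
Let Im := inertia I11 I22 I33 I13 I23.

(* adj(Im) e_3 = det(Im) Im^-1 e_3, which spans D^perp. *)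
Definition Dperp_generator : 'rV[R]_3 :=
  \row_k (if k == i0 then - I13 * I22 else if k == i1 then - I23 * I11 else I11 * I22).

Lemma Dperp_generatorP : inDperp Im Dperp_generator.
Proof. by move=> u; rewrite /inD /gmetric dotvE !mulmx_rowE !mxE /= => ->; ring. Qed.

Lemma inDstar_inertia (m : 'rV[R]_3) : inDstar Im m ->
  I11 * I22 * m 0 i2 = I13 * I22 * m 0 i0 + I23 * I11 * m 0 i1.
Proof.
move=> /(_ _ Dperp_generatorP); rewrite dotvE !mxE /= => hm.
by apply/eqP; rewrite -subr_eq0 -hm; apply/eqP; ring.
Qed.

Lemma suslov_momentum (B m etaperp : 'rV[R]_3) :
  I11 != 0 -> I22 != 0 -> inDstar Im m -> is_etaperp Im B etaperp ->
  let x := omega_coord Im B m in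
  (m + etaperp) 0 i2 = B 0 i2 + I13 * x 0 j0 + I23 * x 0 j1.
Proof.
move=> nz11 nz22 hm [heta hBeta] x.
have [eta0 eta1] := inDperpstar_coord heta.
have km := inDstar_inertia hm.
have kB := inDstar_inertia hBeta; rewrite !mxE eta0 eta1 !subr0 in kB.
have k : I11 * I22 * (m 0 i2 + etaperp 0 i2)
         = I11 * I22 * B 0 i2 + I13 * I22 * (m 0 i0 - B 0 i0)
           + I23 * I11 * (m 0 i1 - B 0 i1) by lra.
apply: (mulfI (mulf_neq0 nz11 nz22)).
by rewrite mxE k /x omega_coordE !mxE /=; field; apply/andP.
Qed.

End SuslovMomentum.

Theorem theorem6p1 (R : realType) (I11 I22 I33 I13 I23 : R) (B : 'rV[R]_3)
    (iD : 'rV[R]_3 -> 'rV[R]_3) (etaperp : 'rV[R]_3) :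
  posdef (inertia I11 I22 I33 I13 I23) ->
  is_iDstar (inertia I11 I22 I33 I13 I23) iD ->
  is_etaperp (inertia I11 I22 I33 I13 I23) B etaperp ->
  forall phi psi : 'rV[R]_2 -> R,
  (forall x, differentiable phi x) -> (forall x, differentiable psi x) ->
  forall (g : 'M[R]_3) (m : 'rV[R]_3),
  is_SO3 g -> inDstar (inertia I11 I22 I33 I13 I23) m ->
  nh_bracket (inertia I11 I22 I33 I13 I23) B iD etaperp phi psi g m =
  bracket_R2 (suslov_c I11 I22 I13 I23 B) phi psi
    (omega_coord (inertia I11 I22 I33 I13 I23) B m).
Proof.
move=> hpos hiD heta phi psi dphi dpsi g m _ hm.
have I11_gt0 := posdef_diag_gt0 i0 hpos; have I22_gt0 := posdef_diag_gt0 i1 hpos.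
rewrite !mxE /= in I11_gt0 I22_gt0.
rewrite (nh_bracket_omega hiD) //; last exact: heta.1.
rewrite (suslov_momentum (lt0r_neq0 I11_gt0) (lt0r_neq0 I22_gt0) hm heta).
by rewrite /bracket_R2 /suslov_c !mxE /=; ring.
Qed.
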